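(* Let $n\ge2$, $\xi_n=\frac{n+1}{n-1}$, $\rho\in\mathbb{C}\setminus\{-\xi_n,-1,1,\xi_n\}$, $z_k\in\mathbb{C}\setminus\{0\}$, and let $\mu_k\in\mathbb{C}$ satisfy $z_k=\exp(i\mu_k)$. Then: (i) $z_k$ is a type-1 zero of $p_{2n}(\rho,z)$ iff $z_k\neq\pm1$ (i.e. $\mu_k\notin\pi\mathbb{Z}$) and $$\sin\frac{\mu_k(n+1)}{2}-\rho\sin\frac{\mu_k(n-1)}{2}=0.$$ In this case the corresponding type-1 eigenvalue is $$\lambda_k=\frac{1-\rho^2}{1-2\rho\cos\mu_k+\rho^2}=-\frac{\sin(n\mu_k)}{\sin\mu_k},$$ and the vector $\mathbf{y}_k$ with entries $y_{kj}=\sin\left[\mu_k\left(j-\frac{n-1}{2}\right)\right]$, $j=0,1,\dots,n-1$, is an eigenvector of $K_n(\rho)$ for $\lambda_k$. (ii) $z_k$ is a type-2 zero of $p_{2n}(\rho,z)$ iff $z_k\neq\pm1$ (i.e. $\mu_k\notin\pi\mathbb{Z}$) and $$\cos\frac{\mu_k(n+1)}{2}-\rho\cos\frac{\mu_k(n-1)}{2}=0.$$ In this case the corresponding type-2 eigenvalue is $$\lambda_k=\frac{1-\rho^2}{1-2\rho\cos\mu_k+\rho^2}=\frac{\sin(n\mu_k)}{\sin\mu_k},$$ and the vector $\mathbf{y}_k$ with entries $y_{kj}=\cos\left[\mu_k\left(j-\frac{n-1}{2}\right)\right]$, $j=0,1,\dots,n-1$, is an eigenvector of $K_n(\rho)$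 for $\lambda_k$.
   Context: $K_n(\rho)=\left[\rho^{|j-k|}\right]_{j,k=1}^n$ (with $\rho^0=1$). $p_{2n}(\rho,z)=z^{2n}+(1+\rho^2)\sum_{k=1}^{n-1}z^{2k}-2\rho\sum_{k=0}^{n-1}z^{2k+1}+1$; $s_{n+1}(\rho,z)=z^{n+1}-\rho z^n+\rho z-1$; $c_{n+1}(\rho,z)=z^{n+1}-\rho z^n-\rho z+1$. For such $\rho$, a zero $z$ of $p_{2n}(\rho,\cdot)$ is a type-1 zero if $s_{n+1}(\rho,z)=s_{n+1}(\rho,z^{-1})=0$ and a type-2 zero if $c_{n+1}(\rho,z)=c_{n+1}(\rho,z^{-1})=0$; every zero is of exactly one type. The eigenvalue corresponding to a zero $z$ is $\frac{z(1-\rho^2)}{(z-\rho)(1-\rho z)}$, and it is called type-1 or type-2 according to the type of $z$. *)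

From HB Require Import structures.
From mathcomp Require Import all_boot all_order all_algebra.
From mathcomp Require Import all_classical all_reals all_analysis.
From mathcomp Require Import complex.
Set Implicit Arguments. Unset Strict Implicit. Unset Printing Implicit Defensive.
Import Order.TTheory GRing.Theory Num.Theory.
Local Open Scope ring_scope.
Local Open Scope complex_scope.

Section Defs.
Variable R : realType.
Local Notation C := R[i].

Definition iC : C := Complex 0 1.

Definition cexp (w : C) : C :=
  (expR (complex.Re w))%:C * ((cos (complex.Im w))%:C + iC * (sin (complex.Im w))%:C).
Definition csin (w : C) : C := (cexp (iC * w) - cexp (- (iC * w))) / (2%:R * iC).
Definition ccos (w : C) : C := (cexp (iC * w) + cexp (- (iC * w))) / 2%:R.

Definition Kmat (n : nat) (rho : C) : 'M[C]_n :=
  \matrix_(j < n, k < n) rho ^+ (maxn j k - minn j k).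

Definition p2n (n : nat) (rho z : C) : C :=
  z ^+ (2 * n) + (1 + rho ^+ 2) * (\sum_(1 <= k < n) z ^+ (2 * k))
  - 2%:R * rho * (\sum_(0 <= k < n) z ^+ (2 * k + 1)) + 1.

Definition s_poly (n : nat) (rho z : C) : C :=
  z ^+ n.+1 - rho * z ^+ n + rho * z - 1.
Definition c_poly (n : nat) (rho z : C) : C :=
  z ^+ n.+1 - rho * z ^+ n - rho * z + 1.

Definition type1_zero (n : nat) (rho z : C) : Prop :=
  p2n n rho z = 0 /\ s_poly n rho z = 0 /\ s_poly n rho z^-1 = 0.
Definition type2_zero (n : nat) (rho z : C) : Prop :=
  p2n n rho z = 0 /\ c_poly n rho z = 0 /\ c_poly n rho z^-1 = 0.

Definition eig_of_zero (rho z : C) : C :=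
  z * (1 - rho ^+ 2) / ((z - rho) * (1 - rho * z)).

Definition is_eigenvector (n : nat) (A : 'M[C]_n) (lam : C) (y : 'cV[C]_n) : Prop :=
  y != 0 /\ A *m y = lam *: y.

Definition xi (n : nat) : C := n.+1%:R / (n.-1)%:R.

End Defs.

From HB Require Import structures.
From mathcomp Require Import all_boot all_order all_algebra.
From mathcomp Require Import all_classical all_reals all_analysis.
From mathcomp Require Import complex.
From mathcomp Require Import ring.
Set Implicit Arguments. Unset Strict Implicit. Unset Printing Implicit Defensive.
Import Order.TTheory GRing.Theory Num.Theory.
Local Open Scope ring_scope.
Local Open Scope complex_scope.

(* Multiplying by z^2 - 1 turns p_{2n}(rho, z) into
   (z^n (z - rho))^2 - (1 - rho z)^2 = s_{n+1}(rho, z) c_{n+1}(rho, z), and both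
   factors have the form z^n (z - rho) + e (1 - rho z) with e = -1, 1, which is
   self-reciprocal up to the factor e z^(-n-1).  Hence the type of a zero is the
   factor that vanishes, and z = 1, -1 are excluded exactly by rho <> 1, -1, xi_n,
   -xi_n.  With u = exp(i mu / 2), so that z = u^2, the sine (cosine) condition is
   s_{n+1}(rho, z) / (2 i u^(n+1)) (resp. c_{n+1}(rho, z) / (2 u^(n+1))).
   K_n(rho) maps the geometric vector (x^j) to lambda(x) (x^j) minus multiples of
   the boundary vectors (rho^(j+1)) and (rho^(n-j)), and lambda(1/x) = lambda(x).
   At a zero z of z^n (z - rho) + e (1 - rho z) the boundary terms of
   (z^j + e z^(n-1) z^(-j)) cancel, and up to a nonzero scalar this is the sine
   (e = -1) or cosine (e = 1) vector of the theorem. *)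

Section KMSEigen.
Variable R : realType.
Local Notation C := R[i].
Local Notation iC := (iC R).
Implicit Types (n : nat) (rho e x z : C).

Lemma cexpD (a b : C) : cexp (a + b) = cexp a * cexp b.
Proof.
case: a => a1 a2; case: b => b1 b2.
rewrite /cexp /iC /= expRD cosD sinD.
by apply/eqP; rewrite eq_complex /=; apply/andP; split; apply/eqP; ring.
Qed.

Lemma cexp0 : cexp (0 : C) = 1.
Proof.
rewrite /cexp /iC /= expR0 cos0 sin0.
by apply/eqP; rewrite eq_complex /=; apply/andP; split; apply/eqP; ring.
Qed.

Lemma cexp_neq0 (a : C) : cexp a != 0.
Proof.
apply/eqP => ea; have := cexpD (- a) a.
by rewrite addNr cexp0 ea mulr0 => /eqP; rewrite oner_eq0.
Qed.

Lemma cexpN (a : C) : cexp (- a) = (cexp a)^-1.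
Proof. by apply: (mulIf (cexp_neq0 a)); rewrite -cexpD addNr cexp0 mulVf ?cexp_neq0. Qed.

Lemma cexpMn (a : C) k : cexp (a *+ k) = cexp a ^+ k.
Proof. by elim: k => [|k IH]; rewrite ?mulr0n ?cexp0 // mulrS cexpD IH exprS. Qed.

Lemma iC_neq0 : iC != 0.
Proof. by apply/eqP => /eqP; rewrite eq_complex /= oner_eq0 andbF. Qed.

Lemma two_iC_neq0 : 2%:R * iC != 0.
Proof. by rewrite mulf_neq0 ?iC_neq0 ?pnatr_eq0. Qed.

Lemma csinE (w : C) : csin w = (cexp (iC * w) - (cexp (iC * w))^-1) / (2%:R * iC).
Proof. by rewrite /csin cexpN. Qed.

Lemma ccosE (w : C) : ccos w = (cexp (iC * w) + (cexp (iC * w))^-1) / 2%:R.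
Proof. by rewrite /ccos cexpN. Qed.

Definition sc_poly n rho e z : C := z ^+ n * (z - rho) + e * (1 - rho * z).

Lemma s_polyE n rho z : s_poly n rho z = sc_poly n rho (-1) z.
Proof. by rewrite /s_poly /sc_poly exprS; ring. Qed.

Lemma c_polyE n rho z : c_poly n rho z = sc_poly n rho 1 z.
Proof. by rewrite /c_poly /sc_poly exprS; ring. Qed.

Lemma sc_polyV n rho e z : e ^+ 2 = 1 -> z != 0 ->
  sc_poly n rho e z^-1 = e * sc_poly n rho e z / z ^+ n.+1.
Proof.
move=> e2 z0; have zn0 : z ^+ n != 0 by rewrite expf_neq0.
have -> : e * sc_poly n rho e z = z ^+ n * (z - rho) * e + e ^+ 2 * (1 - rho * z).
  by rewrite /sc_poly; ring.
by rewrite e2 /sc_poly exprVn exprS; field; rewrite zn0 z0.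
Qed.

Lemma sc_polyNM n rho e z :
  sc_poly n rho e z * sc_poly n rho (- e) z =
  (z ^+ n * (z - rho)) ^+ 2 - e ^+ 2 * (1 - rho * z) ^+ 2.
Proof. by rewrite /sc_poly; ring. Qed.

Lemma mulr_sub1_sumX (x : C) a b : (a <= b)%N ->
  (x - 1) * \sum_(a <= k < b) x ^+ k = x ^+ b - x ^+ a.
Proof.
move=> ab; rewrite mulr_sumr; apply: telescope_sumr_eq => // k _.
by rewrite exprS; ring.
Qed.

Lemma p2n_factor n rho z : (0 < n)%N ->
  (z ^+ 2 - 1) * p2n n rho z = (z ^+ n * (z - rho)) ^+ 2 - (1 - rho * z) ^+ 2.
Proof.
move=> n0; rewrite /p2n.
have -> : \sum_(1 <= k < n) z ^+ (2 * k) = \sum_(1 <= k < n) (z ^+ 2) ^+ k.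
  by apply: eq_bigr => k _; rewrite exprM.
have -> : \sum_(0 <= k < n) z ^+ (2 * k + 1) = z * \sum_(0 <= k < n) (z ^+ 2) ^+ k.
  by rewrite mulr_sumr; apply: eq_bigr => k _; rewrite exprD exprM expr1 mulrC.
have S1 := @mulr_sub1_sumX (z ^+ 2) 1 n n0; have S0 := @mulr_sub1_sumX (z ^+ 2) 0 n (leq0n n).
have ZZ : (z ^+ 2) ^+ n = z ^+ n * z ^+ n by rewrite -exprM mulnC exprM expr2.
move: S1 S0; rewrite expr1 expr0 exprM ZZ.
set S1 := \sum_(1 <= k < n) _; set S0 := \sum_(0 <= k < n) _.
set Z := z ^+ n => S1E S0E.
transitivity ((1 + rho ^+ 2) * ((z ^+ 2 - 1) * S1) - 2%:R * rho * z * ((z ^+ 2 - 1) * S0)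
    + (z ^+ 2 - 1) * (Z * Z + 1)); first by ring.
by rewrite S1E S0E; ring.
Qed.

Lemma p2n_at1 n rho : p2n n.+1 rho 1 = (n%:R * rho - n.+2%:R) * (rho - 1).
Proof.
rewrite /p2n.
under eq_bigr do rewrite expr1n.
under [X in _ - _ * _ * X]eq_bigr do rewrite expr1n.
rewrite !sumr_const_nat expr1n subn1 subn0 /= -!natr1; ring.
Qed.

Lemma p2n_atN1 n rho : p2n n.+1 rho (-1) = (n%:R * rho + n.+2%:R) * (rho + 1).
Proof.
rewrite /p2n.
under eq_bigr do rewrite exprM sqrrN !expr1n.
under [X in _ - _ * _ * X]eq_bigr do rewrite exprD exprM sqrrN !expr1n expr1 mul1r.
rewrite !sumr_const_nat exprM sqrrN !expr1n subn1 subn0 /= mulNrn -!natr1; ring.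
Qed.

Lemma p2n_at1_neq0 n rho : (1 < n)%N -> rho != 1 -> rho != xi R n -> p2n n rho 1 != 0.
Proof.
case: n => [|[|m]] // _ rho1 rhoxi; rewrite p2n_at1 mulf_neq0 ?subr_eq0 //.
apply: contra rhoxi => /eqP rhoE; apply/eqP.
by rewrite /xi /= -rhoE; field.
Qed.

Lemma p2n_atN1_neq0 n rho : (1 < n)%N -> rho != -1 -> rho != - xi R n ->
  p2n n rho (-1) != 0.
Proof.
case: n => [|[|m]] // _ rho1 rhoxi; rewrite p2n_atN1 mulf_neq0 ?addr_eq0 //.
apply: contra rhoxi => /eqP rhoE; apply/eqP.
by rewrite /xi /= -[rho](mulKf (_ : m.+1%:R != 0)) ?pnatr_eq0 // rhoE; field.
Qed.

Lemma p2n_sc_zeroP n rho e z : (0 < n)%N -> e ^+ 2 = 1 -> z != 0 ->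
  p2n n rho 1 != 0 -> p2n n rho (-1) != 0 ->
  (p2n n rho z = 0 /\ sc_poly n rho e z = 0 /\ sc_poly n rho e z^-1 = 0) <->
  (z <> 1 /\ z <> -1 /\ sc_poly n rho e z = 0).
Proof.
move=> n0 e2 z0 p1 pN1; split.
  case=> pz [sz _]; split; [|split=> //] => zE.
    by move: p1; rewrite -zE pz eqxx.
  by move: pN1; rewrite -zE pz eqxx.
case=> z1 [zN1 sz]; split; last by rewrite sc_polyV // sz !(mulr0, mul0r).
have z21 : z ^+ 2 - 1 != 0.
  by rewrite subr_sqr_1 mulf_neq0 // ?subr_eq0 ?addr_eq0; apply/eqP.
have : (z ^+ 2 - 1) * p2n n rho z == 0.
  by have := sc_polyNM n rho e z; rewrite e2 mul1r sz mul0r p2n_factor // => <-.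
by rewrite mulf_eq0 (negbTE z21) => /eqP.
Qed.

Lemma sc_zero_neq_pole n rho e z : z != 0 -> e != 0 -> rho ^+ 2 != 1 ->
  sc_poly n rho e z = 0 -> z != rho /\ 1 - rho * z != 0.
Proof.
move=> z0 e0 rho2 sz.
have zrho : z != rho.
  apply: contra_eqN sz => /eqP ->.
  by rewrite /sc_poly subrr mulr0 add0r mulf_neq0 // -expr2 subr_eq0 eq_sym.
split=> //; apply: contra_eqN sz => /eqP rz.
by rewrite /sc_poly rz mulr0 addr0 mulf_neq0 ?expf_neq0 ?subr_eq0.
Qed.

Lemma eig_of_zeroE rho z : z != 0 ->
  eig_of_zero rho z = (1 - rho ^+ 2) / (1 - 2%:R * rho * ((z + z^-1) / 2%:R) + rho ^+ 2).
Proof.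
move=> z0; rewrite /eig_of_zero.
set D := 1 - _ + _.
have -> : (z - rho) * (1 - rho * z) = z * D by rewrite /D; field.
have [->|D0] := eqVneq D 0; first by rewrite !(mulr0, invr0).
by field; rewrite D0 z0.
Qed.

Lemma eig_of_sc_zero n rho e z : e ^+ 2 = 1 -> z ^+ 2 != 1 -> z != 0 ->
  z != rho -> 1 - rho * z != 0 -> sc_poly n rho e z = 0 ->
  eig_of_zero rho z = e * ((z ^+ n - z ^- n) / (z - z^-1)).
Proof.
move=> e2 z2 z0 zrho rz sz.
have zn : z ^+ n = - e * (1 - rho * z) / (z - rho).
  apply: (canRL (mulfK _)); rewrite ?subr_eq0 //; apply/eqP.
  by rewrite mulNr -addr_eq0 -/(sc_poly n rho e z) sz.
have z21 : z ^+ 2 - 1 != 0 by rewrite subr_eq0.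
have zr : z - rho != 0 by rewrite subr_eq0.
move/eqP: e2; rewrite /eig_of_zero zn sqrf_eq1 => /orP[] /eqP ->.
  by field; rewrite z0 zr rz -expr2 z21.
by field; rewrite z0 zr rz -expr2 z21.
Qed.

Lemma Kmat_row_geom n rho x j : (j < n)%N ->
  (x - rho) * (1 - rho * x) * \sum_(k < n) rho ^+ (maxn j k - minn j k) * x ^+ k =
  x * (1 - rho ^+ 2) * x ^+ j - rho ^+ j.+1 * (1 - rho * x)
  - rho ^+ (n - j) * x ^+ n * (x - rho).
Proof.
move=> jn; rewrite -(big_mkord xpredT (fun k => rho ^+ (maxn j k - minn j k) * x ^+ k)).
rewrite (@big_cat_nat _ _ _ j.+1 0 n _ _ (leq0n _) jn) /=.
have -> : \sum_(0 <= k < j.+1) rho ^+ (maxn j k - minn j k) * x ^+ k =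
          \sum_(k < j.+1) rho ^+ (j - k) * x ^+ k.
  rewrite big_mkord; apply: eq_bigr => k _.
  by rewrite (maxn_idPl (ltn_ord k : k <= j)%N) (minn_idPr (ltn_ord k : k <= j)%N).
have -> : \sum_(j.+1 <= k < n) rho ^+ (maxn j k - minn j k) * x ^+ k =
          \sum_(j.+1 <= k < n) rho ^+ (k - j) * x ^+ k.
  apply: eq_big_nat => k /andP[jk _].
  by rewrite (maxn_idPr (ltnW jk)) (minn_idPl (ltnW jk)).
have lower : (rho - x) * \sum_(k < j.+1) rho ^+ (j - k) * x ^+ k = rho ^+ j.+1 - x ^+ j.+1.
  by rewrite subrXX.
have upper : (1 - rho * x) * \sum_(j.+1 <= k < n) rho ^+ (k - j) * x ^+ k =
             rho * x ^+ j.+1 - rho ^+ (n - j) * x ^+ n.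
  rewrite mulr_sumr (telescope_sumr_eq (fun k => - (rho ^+ (k - j) * x ^+ k))) //.
    by rewrite subSnn expr1; ring.
  by move=> k /andP[jk _]; rewrite (subSn (ltnW jk)) !exprS; ring.
move: lower upper; set L := \sum_(k < j.+1) _; set U := \sum_(j.+1 <= k < n) _.
rewrite !exprS => lower upper.
transitivity ((1 - rho * x) * (- ((rho - x) * L)) + (x - rho) * ((1 - rho * x) * U)); first by ring.
by rewrite lower upper; ring.
Qed.

Definition powcol n x : 'cV[C]_n := \col_(j < n) x ^+ j.

Lemma Kmat_powcol n rho x : x != rho -> 1 - rho * x != 0 ->
  Kmat n rho *m powcol n x = eig_of_zero rho x *: powcol n x
    - (x - rho)^-1 *: (\col_(j < n) rho ^+ j.+1)
    - (x ^+ n / (1 - rho * x)) *: (\col_(j < n) rho ^+ (n - j)).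
Proof.
move=> xrho rx; have xr : x - rho != 0 by rewrite subr_eq0.
apply/matrixP => j k; rewrite !mxE; under eq_bigr do rewrite !mxE.
apply: (mulfI (mulf_neq0 xr rx)); rewrite Kmat_row_geom // /eig_of_zero.
by field; rewrite xr rx.
Qed.

Lemma eig_of_zeroV rho x : x != 0 -> eig_of_zero rho x^-1 = eig_of_zero rho x.
Proof.
move=> x0; rewrite /eig_of_zero.
have -> : (x^-1 - rho) * (1 - rho * x^-1) = (x - rho) * (1 - rho * x) / x ^+ 2.
  by field.
have [->|D0] := eqVneq ((x - rho) * (1 - rho * x)) 0; first by rewrite !(mul0r, invr0, mulr0).
by move: D0; rewrite mulf_eq0 negb_or => /andP[xr rx]; field; rewrite xr rx x0.
Qed.

Lemma is_eigenvectorZ n (A : 'M[C]_n) lam y c : c != 0 ->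
  is_eigenvector A lam y -> is_eigenvector A lam (c *: y).
Proof.
move=> c0 [y0 Ay]; split; first by rewrite scaler_eq0 negb_or c0.
by rewrite -scalemxAr Ay scalerA mulrC -scalerA.
Qed.

Lemma powcol_combination_neq0 n z c : (1 < n)%N -> z != 0 -> z ^+ 2 != 1 ->
  powcol n z + c *: powcol n z^-1 != 0.
Proof.
move=> n1 z0 z2; apply/eqP => /matrixP y0.
have := y0 (Ordinal (ltnW n1)) 0; have := y0 (Ordinal n1) 0; rewrite !mxE /= => y1 y0'.
move: z2; rewrite -subr_eq0 (_ : z ^+ 2 - 1 =
    z * (z ^+ 1 + c * z^-1 ^+ 1) - (z ^+ 0 + c * z^-1 ^+ 0)).
  by rewrite y1 y0' mulr0 subrr eqxx.
by rewrite expr1 !expr0; field.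
Qed.

Lemma sc_zero_eigenvector n rho e z : (1 < n)%N -> e ^+ 2 = 1 -> z ^+ 2 != 1 ->
  z != 0 -> z != rho -> 1 - rho * z != 0 -> sc_poly n rho e z = 0 ->
  is_eigenvector (Kmat n rho) (eig_of_zero rho z)
    (powcol n z + (e * z ^+ n.-1) *: powcol n z^-1).
Proof.
case: n => [|m] // m0 e2 z2 z0 zrho rz sz /=.
have zr : z - rho != 0 by rewrite subr_eq0.
have zm : z ^+ m = - e * (1 - rho * z) / ((z - rho) * z).
  apply: (canRL (mulfK _)); rewrite ?mulf_neq0 //; apply/eqP.
  by rewrite mulrA mulrAC -exprSr mulNr -addr_eq0 -/(sc_poly m.+1 rho e z) sz.
have [head0 tail0] : (z - rho)^-1 + e * z ^+ m * (z^-1 - rho)^-1 = 0 /\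
    z ^+ m.+1 / (1 - rho * z) + e * z ^+ m * (z^-1 ^+ m.+1 / (1 - rho * z^-1)) = 0.
  rewrite exprVn exprS zm; move/eqP: e2; rewrite sqrf_eq1 => /orP[] /eqP -> .
    by split; field; rewrite ?mulNr ?z0 ?zr ?rz.
  by split; field; rewrite ?mulNr ?z0 ?zr ?rz.
split; first exact: powcol_combination_neq0.
have zVrho : z^-1 != rho by apply: contra rz => /eqP <-; rewrite mulVf // subrr.
have rzV : 1 - rho * z^-1 != 0.
  by rewrite (_ : 1 - rho * z^-1 = (z - rho) / z) ?mulf_neq0 ?invr_eq0 //; field.
rewrite mulmxDr -scalemxAr !Kmat_powcol // eig_of_zeroV //.
apply/matrixP => i j; rewrite !mxE.
set lam := eig_of_zero _ _; set c := e * z ^+ m; set a' := (z^-1 - rho)^-1.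
set b' := _ / (1 - rho * z^-1).
set a := (z - rho)^-1; set b := z ^+ m.+1 / _.
transitivity (lam * (z ^+ i + c * z^-1 ^+ i) - (a + c * a') * rho ^+ i.+1
  - (b + c * b') * rho ^+ (m.+1 - i)); first by ring.
by rewrite head0 tail0; ring.
Qed.

Lemma sc_zero_spectrum n rho e z : (1 < n)%N -> e ^+ 2 = 1 -> rho ^+ 2 != 1 ->
  z != 0 -> z != 1 -> z != -1 -> sc_poly n rho e z = 0 ->
  [/\ eig_of_zero rho z = (1 - rho ^+ 2) / (1 - 2%:R * rho * ((z + z^-1) / 2%:R) + rho ^+ 2),
      eig_of_zero rho z = e * ((z ^+ n - z ^- n) / (z - z^-1)) &
      is_eigenvector (Kmat n rho) (eig_of_zero rho z)
        (powcol n z + (e * z ^+ n.-1) *: powcol n z^-1)].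
Proof.
move=> n1 e2 rho2 z0 z1 zN1 sz.
have e0 : e != 0.
  by apply/eqP => e0; move: e2; rewrite e0 expr0n => /esym/eqP; rewrite oner_eq0.
have [zrho rz] := sc_zero_neq_pole z0 e0 rho2 sz.
have z2 : z ^+ 2 != 1 by rewrite sqrf_eq1 negb_or z1 zN1.
split; [exact: eig_of_zeroE | exact: eig_of_sc_zero | exact: sc_zero_eigenvector].
Qed.

Section HalfAngle.
Variable mu : C.
Local Notation z := (cexp (iC * mu)).
Local Notation u := (cexp (iC * mu / 2%:R)).

Lemma cexp_half_natmul k : cexp (iC * (mu * k%:R / 2%:R)) = u ^+ k.
Proof. by rewrite -cexpMn -mulr_natr; congr cexp; ring. Qed.

Lemma cexp_half_sqr : cexp (iC * mu) = u ^+ 2.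
Proof. by rewrite -cexp_half_natmul; congr cexp; field. Qed.

Lemma csin_half_natmul k : csin (mu * k%:R / 2%:R) = (u ^+ k - u ^- k) / (2%:R * iC).
Proof. by rewrite csinE cexp_half_natmul. Qed.

Lemma ccos_half_natmul k : ccos (mu * k%:R / 2%:R) = (u ^+ k + u ^- k) / 2%:R.
Proof. by rewrite ccosE cexp_half_natmul. Qed.

Lemma cexp_centered j m : cexp (iC * (mu * (j%:R - m%:R / 2%:R))) = (u ^+ 2) ^+ j / u ^+ m.
Proof.
rewrite -exprM -!cexp_half_natmul -cexpN -cexpD; congr cexp.
by rewrite natrM; field.
Qed.

Lemma csin_natmul_ratio n : csin (n%:R * mu) / csin mu = (z ^+ n - z ^- n) / (z - z^-1).
Proof.
rewrite !csinE (_ : iC * (n%:R * mu) = (iC * mu) *+ n) ?cexpMn; last first.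
  by rewrite mulrCA mulr_natl.
by rewrite invf_div mulrA divfK ?two_iC_neq0.
Qed.

Lemma csin_zero_condP n rho : (0 < n)%N ->
  csin (mu * n.+1%:R / 2%:R) - rho * csin (mu * n.-1%:R / 2%:R) = 0 <->
  s_poly n rho z = 0.
Proof.
case: n => [|m] // _; rewrite !csin_half_natmul cexp_half_sqr /s_poly /=.
have u0 := cexp_neq0 (iC * mu / 2%:R).
have D0 : 2%:R * iC * u ^+ m.+2 != 0 by rewrite mulf_neq0 ?expf_neq0 ?two_iC_neq0.
have -> : (u ^+ m.+2 - u ^- m.+2) / (2%:R * iC) - rho * ((u ^+ m - u ^- m) / (2%:R * iC)) =
  ((u ^+ 2) ^+ m.+2 - rho * (u ^+ 2) ^+ m.+1 + rho * u ^+ 2 - 1) / (2%:R * iC * u ^+ m.+2).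
  by rewrite -!exprM !mul2n -!addnn !exprD !exprS; field; rewrite expf_neq0 // u0 iC_neq0.
split=> [|->]; last by rewrite mul0r.
by move/eqP; rewrite mulf_eq0 invr_eq0 (negbTE D0) orbF => /eqP.
Qed.

Lemma ccos_zero_condP n rho : (0 < n)%N ->
  ccos (mu * n.+1%:R / 2%:R) - rho * ccos (mu * n.-1%:R / 2%:R) = 0 <->
  c_poly n rho z = 0.
Proof.
case: n => [|m] // _; rewrite !ccos_half_natmul cexp_half_sqr /c_poly /=.
have u0 := cexp_neq0 (iC * mu / 2%:R).
have D0 : 2%:R * u ^+ m.+2 != 0 by rewrite mulf_neq0 ?expf_neq0 ?pnatr_eq0.
have -> : (u ^+ m.+2 + u ^- m.+2) / 2%:R - rho * ((u ^+ m + u ^- m) / 2%:R) =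
  ((u ^+ 2) ^+ m.+2 - rho * (u ^+ 2) ^+ m.+1 - rho * u ^+ 2 + 1) / (2%:R * u ^+ m.+2).
  by rewrite -!exprM !mul2n -!addnn !exprD !exprS; field; rewrite expf_neq0 // u0.
split=> [|->]; last by rewrite mul0r.
by move/eqP; rewrite mulf_eq0 invr_eq0 (negbTE D0) orbF => /eqP.
Qed.

Lemma csin_centered_col n :
  \col_(j < n) csin (mu * (j%:R - n.-1%:R / 2%:R)) =
  (2%:R * iC * u ^+ n.-1)^-1 *: (powcol n z + (-1 * z ^+ n.-1) *: powcol n z^-1).
Proof.
apply/matrixP => j k; rewrite !mxE csinE cexp_centered cexp_half_sqr exprVn.
rewrite -!exprM ![(2 * _)%N]mulnC !exprM.
have u0 := cexp_neq0 (iC * mu / 2%:R).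
by field; rewrite ?expf_neq0 ?u0 ?iC_neq0.
Qed.

Lemma ccos_centered_col n :
  \col_(j < n) ccos (mu * (j%:R - n.-1%:R / 2%:R)) =
  (2%:R * u ^+ n.-1)^-1 *: (powcol n z + (1 * z ^+ n.-1) *: powcol n z^-1).
Proof.
apply/matrixP => j k; rewrite !mxE ccosE cexp_centered cexp_half_sqr exprVn.
rewrite -!exprM ![(2 * _)%N]mulnC !exprM.
have u0 := cexp_neq0 (iC * mu / 2%:R).
by field; rewrite ?expf_neq0 ?u0.
Qed.

End HalfAngle.
End KMSEigen.

Theorem theorem4p1 (R : realType) (n : nat) (rho z mu : R[i]) :
  (2 <= n)%N ->
  rho <> - xi R n -> rho <> -1 -> rho <> 1 -> rho <> xi R n ->
  z <> 0 ->
  z = cexp (iC R * mu) ->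
  (* (i) type-1 zeros *)
  ((type1_zero n rho z <->
      (z <> 1 /\ z <> -1 /\
       csin (mu * n.+1%:R / 2%:R) - rho * csin (mu * n.-1%:R / 2%:R) = 0)) /\
   (type1_zero n rho z ->
      eig_of_zero rho z = (1 - rho ^+ 2) / (1 - 2%:R * rho * ccos mu + rho ^+ 2) /\
      eig_of_zero rho z = - (csin (n%:R * mu) / csin mu) /\
      is_eigenvector (Kmat n rho) (eig_of_zero rho z)
        (\col_(j < n) csin (mu * (j%:R - n.-1%:R / 2%:R))))) /\
  (* (ii) type-2 zeros *)
  ((type2_zero n rho z <->
      (z <> 1 /\ z <> -1 /\
       ccos (mu * n.+1%:R / 2%:R) - rho * ccos (mu * n.-1%:R / 2%:R) = 0)) /\
   (type2_zero n rho z ->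
      eig_of_zero rho z = (1 - rho ^+ 2) / (1 - 2%:R * rho * ccos mu + rho ^+ 2) /\
      eig_of_zero rho z = csin (n%:R * mu) / csin mu /\
      is_eigenvector (Kmat n rho) (eig_of_zero rho z)
        (\col_(j < n) ccos (mu * (j%:R - n.-1%:R / 2%:R))))).
Proof.
move=> n2 /eqP rhoNxi /eqP rhoN1 /eqP rho1 /eqP rhoxi /eqP z0 zE; subst z.
have n0 : (0 < n)%N := ltnW n2.
have rho2 : rho ^+ 2 != 1 by rewrite sqrf_eq1 negb_or rho1 rhoN1.
have p1 := p2n_at1_neq0 n2 rho1 rhoxi; have pN1 := p2n_atN1_neq0 n2 rhoN1 rhoNxi.
have zerosP e (e2 : e ^+ 2 = 1) := p2n_sc_zeroP n0 e2 z0 p1 pN1.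
have spec e (e2 : e ^+ 2 = 1) := sc_zero_spectrum n2 e2 rho2 z0.
have sgnN1 : (-1 : R[i]) ^+ 2 = 1 by rewrite sqrrN expr1n.
have sgn1 : (1 : R[i]) ^+ 2 = 1 by rewrite expr1n.
rewrite /type1_zero /type2_zero !s_polyE !c_polyE (zerosP _ sgnN1) (zerosP _ sgn1).
rewrite csin_zero_condP // ccos_zero_condP // s_polyE c_polyE.
rewrite ccosE csin_natmul_ratio csin_centered_col ccos_centered_col.
split; split=> // -[/eqP z1 [/eqP zN1 sz]].
- have [eig1 eig2 vec] := spec _ sgnN1 z1 zN1 sz.
  split=> //; split; first by rewrite eig2 mulN1r.
  apply: is_eigenvectorZ vec.
  by rewrite invr_eq0 mulf_neq0 ?two_iC_neq0 ?expf_neq0 ?cexp_neq0.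
- have [eig1 eig2 vec] := spec _ sgn1 z1 zN1 sz.
  split=> //; split; first by rewrite eig2 mul1r.
  apply: is_eigenvectorZ vec.
  by rewrite invr_eq0 mulf_neq0 ?pnatr_eq0 ?expf_neq0 ?cexp_neq0.
Qed.
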